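(* In a mirror graph $G$, any two distinct convex cycles intersect in the empty set, in a single vertex, or in a single edge.
   Context: A mirror graph is a finite connected simple graph $G$ admitting a partition $\{E_1,\dots,E_k\}$ of its edges such that for every $i$ there is an automorphism $\alpha_i$ swapping the endpoints of every edge of $E_i$, with $G-E_i$ having exactly two components that $\alpha_i$ maps isomorphically onto each other. A cycle is convex if every shortest path of $G$ between two of its vertices lies on it. *)

From mathcomp Require Import all_boot all_fingroup.
Set Implicit Arguments. Unset Strict Implicit. Unset Printing Implicit Defensive.

Definition simple_graph (T : finType) (e : rel T) : Prop :=
  symmetric e /\ irreflexive e.

Definition connected_graph (T : finType) (e : rel T) : Prop :=
  forall x y : T, connect e x y.

Definition edges (T : finType) (e : rel T) : {set {set T}} :=
  [set s : {set T} | [exists x, exists y, e x y && (s == [set x; y])]].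

(* Graph automorphism (bijective since it is a permutation). *)
Definition is_aut (T : finType) (e : rel T) (a : {perm T}) : Prop :=
  forall x y, e (a x) (a y) = e x y.

Definition del_edges (T : finType) (e : rel T) (F : {set {set T}}) : rel T :=
  fun x y => e x y && ([set x; y] \notin F).

(* The mirror condition for an edge class F with automorphism a:
   a swaps the endpoints of every edge of F, G - F has exactly two
   components C1 (of u) and C2 (of v), and a maps C1 onto C2 and C2 onto C1
   (a being an automorphism of G, the restrictions are isomorphisms). *)
Definition mirror_class (T : finType) (e : rel T) (F : {set {set T}})
    (a : {perm T}) : Prop :=
  is_aut e a /\
  (forall x y, e x y -> [set x; y] \in F -> a x = y /\ a y = x) /\
  exists u v : T,
    ~~ connect (del_edges e F) u v /\
    (forall w, connect (del_edges e F) u w || connect (del_edges e F) v w) /\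
    (forall w, connect (del_edges e F) u w = connect (del_edges e F) v (a w)).

Definition mirror_graph (T : finType) (e : rel T) : Prop :=
  simple_graph e /\ connected_graph e /\
  exists P : {set {set {set T}}},
    partition P (edges e) /\
    forall F, F \in P -> exists a : {perm T}, mirror_class e F a.

Definition is_cycle (T : finType) (e : rel T) (c : seq T) : Prop :=
  3 <= size c /\ uniq c /\ path.cycle e c.

Definition cverts (T : finType) (c : seq T) : {set T} := [set x in c].

Definition cedges (T : finType) (c : seq T) : {set {set T}} :=
  [set [set x; next c x] | x in c].

Fixpoint pedges (T : finType) (x : T) (p : seq T) : {set {set T}} :=
  if p is y :: p' then [set x; y] |: pedges y p' else set0.

Definition shortest_path (T : finType) (e : rel T) (x : T) (p : seq T) (y : T)
  : Prop :=
  path e x p /\ last x p = y /\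
  forall q, path e x q -> last x q = y -> size p <= size q.

Definition convex_cycle (T : finType) (e : rel T) (c : seq T) : Prop :=
  is_cycle e c /\
  forall x y p, x \in c -> y \in c -> shortest_path e x p y ->
    {subset x :: p <= c} /\ pedges x p \subset cedges c.

From mathcomp Require Import all_boot all_fingroup.
Set Implicit Arguments. Unset Strict Implicit. Unset Printing Implicit Defensive.

(* Every edge class F of a mirror graph is the cut between the two sides of
   its mirror a, and reflecting a path behind its first crossing of F shows
   that each vertex is strictly closer to the endpoint of an F-edge lying on
   its own side.  In a convex cycle through an F-edge {y, z}, shortest paths
   from y to the vertices of y's side on the far part of the cycle therefore
   leave y through the cycle neighbour other than z, and their mirror images
   leave z through the neighbour other than y: a maps prev y to next z.  So a
   convex cycle is determined by two consecutive edges.  Finally, a shortest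
   path between two common vertices of two convex cycles lies on both; if the
   cycles differ it is a single common edge, and three common vertices would
   produce two consecutive common edges. *)

Lemma split_at_exit (T : eqType) (P : pred T) x s :
  P x -> ~~ P (last x s) ->
  exists g1 v g2, [/\ s = g1 ++ v :: g2, P (last x g1) & ~~ P v].
Proof.
elim: s x => [|y s IHs] x /= Px; first by rewrite Px.
have [Py /(IHs y Py) [g1 [v [g2 [-> Pg1 Pv]]]]|nPy _] := boolP (P y).
  by exists (y :: g1), v, g2.
by exists [::], y, s.
Qed.

Section Distance.
Variables (T : finType) (e : rel T).

Definition walk_of_size (x y : T) (n : nat) : bool :=
  [exists p : n.-tuple T, path e x p && (last x p == y)].

Lemma walk_of_size_exists x y : exists n, walk_of_size x y n || ~~ connect e x y.
Proof.
case: (boolP (connect e x y)) => [/connectP [p p_e p_y]|_]; last by exists 0; rewrite orbT.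
by exists (size p); apply/orP; left; apply/existsP; exists (in_tuple p); rewrite /= p_e p_y eqxx.
Qed.

(* The value 0 when [y] is unreachable from [x] is junk. *)
Definition gdist (x y : T) : nat := ex_minn (walk_of_size_exists x y).

Lemma gdist_le_size x y p : path e x p -> last x p = y -> gdist x y <= size p.
Proof.
move=> p_e p_y; rewrite /gdist; case: ex_minnP => m _; apply.
by apply/orP; left; apply/existsP; exists (in_tuple p); rewrite /= p_e p_y eqxx.
Qed.

Hypothesis e_conn : connected_graph e.

Lemma gdist_path x y : exists p, [/\ path e x p, last x p = y & size p = gdist x y].
Proof.
rewrite /gdist; case: ex_minnP => m /orP [|]; last by rewrite e_conn.
by case/existsP=> p /andP [p_e /eqP p_y] _; exists p; rewrite size_tuple.
Qed.

Lemma shortest_pathE x p y :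
  shortest_path e x p y <-> [/\ path e x p, last x p = y & size p = gdist x y].
Proof.
split=> [[p_e [p_y p_min]]|[p_e p_y p_size]].
  have [q [q_e q_y q_size]] := gdist_path x y.
  by split=> //; apply/eqP; rewrite eqn_leq gdist_le_size // -q_size p_min.
by do 2!split=> //; move=> q q_e q_y; rewrite p_size gdist_le_size.
Qed.

Lemma gdist_eq0 x y : gdist x y = 0 -> x = y.
Proof. by have [[|? ?] [_ <- <-]] := gdist_path x y. Qed.

Lemma gdist_edge x y : e x y -> gdist x y <= 1.
Proof. by move=> xy; apply: (@gdist_le_size _ _ [:: y]); rewrite /= ?xy. Qed.

Hypothesis e_sym : symmetric e.

Lemma gdistC x y : gdist x y = gdist y x.
Proof.
suff gdist_le u v : gdist u v <= gdist v u by apply/eqP; rewrite eqn_leq !gdist_le.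
have [p [p_e p_u <-]] := gdist_path v u.
rewrite -(size_belast v p) -size_rev; apply: gdist_le_size.
  by rewrite -p_u rev_path; apply: sub_path p_e => ? ?; rewrite e_sym.
by case: p p_u {p_e} => [|w p] /= <-; rewrite ?rev_cons ?last_rcons.
Qed.

End Distance.

Section Automorphism.
Variables (T : finType) (e : rel T) (a : {perm T}).
Hypothesis a_aut : is_aut e a.

Lemma path_map_aut x p : path e (a x) (map a p) = path e x p.
Proof. by elim: p x => [|y p IHp] x //=; rewrite a_aut IHp. Qed.

Lemma is_aut_inv : is_aut e a^-1.
Proof. by move=> x y; rewrite -a_aut !permKV. Qed.

Hypothesis e_conn : connected_graph e.

Lemma gdist_aut_le x y : gdist e (a x) (a y) <= gdist e x y.
Proof.
have [p [p_e p_y <-]] := gdist_path e_conn x y.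
by rewrite -(size_map a) gdist_le_size ?path_map_aut // last_map p_y.
Qed.

End Automorphism.

Lemma gdist_aut (T : finType) (e : rel T) (a : {perm T}) x y :
  is_aut e a -> connected_graph e -> gdist e (a x) (a y) = gdist e x y.
Proof.
move=> a_aut e_conn; apply/eqP; rewrite eqn_leq gdist_aut_le //.
by have := gdist_aut_le (is_aut_inv a_aut) e_conn (a x) (a y); rewrite !permK.
Qed.

Section CycleEdges.
Variables (T : finType) (c : seq T).

Lemma cedges_vertex E x : E \in cedges c -> x \in E -> x \in c.
Proof. by case/imsetP=> t t_c -> /set2P [] ->; rewrite ?mem_next. Qed.

Lemma cedges_subset d :
  {in c, forall t, t \in d /\ next d t = next c t} -> cedges c \subset cedges d.
Proof.
move=> c_d; apply/subsetP=> _ /imsetP [t t_c ->].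
by have [t_d <-] := c_d t t_c; apply/imsetP; exists t.
Qed.

Lemma cedges_next x y : [set x; y] \in cedges c -> next c x = y \/ next c y = x.
Proof.
case/imsetP=> t _ xy_t.
have: x \in [set t; next c t] by rewrite -xy_t set21.
have: y \in [set t; next c t] by rewrite -xy_t set22.
have: t \in [set x; y] by rewrite xy_t set21.
have: next c t \in [set x; y] by rewrite xy_t set22.
move=> /set2P [] ? /set2P [] ? /set2P [] ? /set2P [] ?;
  (by left; congruence) || (by right; congruence).
Qed.

Hypothesis c_uniq : uniq c.

Lemma cedges_rot i : cedges (rot i c) = cedges c.
Proof.
apply/setP=> E; apply/imsetP/imsetP=> [] [t t_c ->]; exists t;
  by rewrite ?mem_rot ?next_rot // -(mem_rot i).
Qed.

Lemma cedges_rev : cedges (rev c) = cedges c.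
Proof.
apply/setP=> E; apply/imsetP/imsetP=> [] [t t_c ->].
  exists (prev c t); first by rewrite mem_prev -mem_rev.
  by rewrite next_rev // next_prev // setUC.
exists (next c t); first by rewrite mem_rev mem_next.
by rewrite next_rev // prev_next // setUC.
Qed.

End CycleEdges.

Section ConvexCycle.
Variables (T : finType) (e : rel T).

Lemma convex_rot c i : convex_cycle e c -> convex_cycle e (rot i c).
Proof.
move=> [[c_size [c_uniq c_cycle]] c_cvx]; split.
  by rewrite /is_cycle size_rot rot_uniq rot_cycle.
move=> x y p; rewrite !mem_rot cedges_rot // => x_c y_c xy_short.
have [p_c p_edges] := c_cvx x y p x_c y_c xy_short.
by split=> // w /p_c; rewrite mem_rot.
Qed.

Lemma convex_rev c : symmetric e -> convex_cycle e c -> convex_cycle e (rev c).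
Proof.
move=> e_sym [[c_size [c_uniq c_cycle]] c_cvx]; split.
  rewrite /is_cycle size_rev rev_uniq rev_cycle; do 2!split=> //.
  by apply: sub_cycle c_cycle => ? ? /=; rewrite e_sym.
move=> x y p; rewrite !mem_rev cedges_rev // => x_c y_c xy_short.
have [p_c p_edges] := c_cvx x y p x_c y_c xy_short.
by split=> // w /p_c; rewrite mem_rev.
Qed.

Lemma convex_first_step c x y h p :
  convex_cycle e c -> x \in c -> y \in c -> shortest_path e x (h :: p) y ->
  next c x = h \/ next c h = x.
Proof.
move=> [[_ [c_uniq _]] c_cvx] x_c y_c xy_short; apply: cedges_next.
by have [_ /subsetP] := c_cvx _ _ _ x_c y_c xy_short; apply; rewrite /= setU11.
Qed.

Lemma convex_cycle_orient c x y z : symmetric e ->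
  convex_cycle e c -> [set x; y] \in cedges c -> [set y; z] \in cedges c -> x != z ->
  exists2 d, convex_cycle e d &
    [/\ cedges d = cedges c, x \in d, next d x = y & next d y = z].
Proof.
move=> e_sym c_cvx xy_c yz_c xz; have [[_ [c_uniq _]] _] := c_cvx.
have x_c : x \in c by apply: (cedges_vertex xy_c); rewrite set21.
case/cedges_next: xy_c => [nx|ny]; case/cedges_next: yz_c => [ny'|nz].
- by exists c.
- by case/eqP: xz; rewrite -(prev_next c_uniq x) nx -nz prev_next.
- by case/eqP: xz; rewrite -ny ny'.
exists (rev c); first exact: convex_rev.
by rewrite cedges_rev // mem_rev !next_rev // -{2}ny -nz !prev_next.
Qed.

End ConvexCycle.

Section MirrorClass.
Variables (T : finType) (e : rel T) (F : {set {set T}}) (a : {perm T}) (K : pred T).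
Hypotheses (e_sym : symmetric e) (e_conn : connected_graph e) (a_aut : is_aut e a).
Hypothesis a_swap : forall x y, e x y -> [set x; y] \in F -> a x = y /\ a y = x.
Hypothesis K_cut : forall x y, e x y -> ([set x; y] \in F) = (K x != K y).

Lemma cut_edge_swap x y : e x y -> K x != K y -> a y = x.
Proof. by move=> xy Kxy; have [] := a_swap xy; rewrite ?K_cut. Qed.

(* Reflecting a shortest path from [p] to [z] behind its first crossing of
   the cut saves that crossing edge. *)
Lemma gdist_mirror_lt y z p :
  a z = y -> K z != K y -> K p = K y -> gdist e p y < gdist e p z.
Proof.
move=> azy Kzy Kp; have [g [g_e g_z g_size]] := gdist_path e_conn p z.
have := @split_at_exit _ (fun q => K q == K y) p g.
rewrite /= Kp g_z eqxx (negbTE Kzy) => /(_ isT isT) [g1 [v [g2 [g_split /eqP Ku Kv]]]].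
subst g; move: g_e; rewrite cat_path /= => /and3P [g1_e uv g2_e].
have avu : a v = last p g1 by apply: cut_edge_swap; rewrite // Ku eq_sym.
have: gdist e p y <= size (g1 ++ map a g2).
  apply: gdist_le_size; first by rewrite cat_path g1_e -avu path_map_aut.
  by rewrite last_cat -avu last_map -azy -g_z last_cat.
by move/leq_ltn_trans; apply; rewrite -g_size !size_cat size_map /= addnS.
Qed.

Lemma mirror_neighbour_side x y z :
  a y = z -> K y != K z -> e x y -> x != z -> K x = K y.
Proof.
move=> ayz Kyz xy; apply: contraNeq => Kxy.
have Kxz : K x = K z by move: Kyz Kxy; case: (K x); case: (K y); case: (K z).
have := leq_trans (gdist_mirror_lt ayz Kyz Kxz) (gdist_edge xy).
by rewrite ltnS leqn0 => /eqP /(gdist_eq0 e_conn) ->.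
Qed.

Lemma not_shortest_via_mirror y z p g :
  a z = y -> K z != K y -> K p = K y -> ~ shortest_path e y (z :: g) p.
Proof.
move=> azy Kzy Kp /(shortest_pathE e_conn) [/= /andP [_ g_e] g_p g_size].
have := gdist_mirror_lt azy Kzy Kp.
rewrite (gdistC e_conn e_sym p y) (gdistC e_conn e_sym p z) -g_size ltnNge.
by rewrite ltnW // ltnS gdist_le_size.
Qed.

Lemma cycle_recrosses_cut y z w s (c := [:: y, z, w & s]) :
  is_cycle e c -> [set y; z] \in F ->
  exists2 v, v \in c & [/\ v != y, K v = K y, a v \in c & K (a v) != K y].
Proof.
move=> [_ [c_uniq c_cycle]] yzF; have /and4P [y_zws z_ws _ _] := c_uniq.
move: c_cycle; rewrite [path.cycle _ _]/= rcons_path => /and4P [yz zw ws xy].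
have [ayz _] := a_swap yz yzF; have Kyz : K y != K z by rewrite -K_cut.
have Kx : K (last w s) = K y.
  by apply: mirror_neighbour_side ayz Kyz xy _; apply: contraNneq z_ws => <-; apply: mem_last.
have := @split_at_exit _ (fun q => K q != K y) z (w :: s).
rewrite /= Kx eqxx eq_sym Kyz => /(_ isT isT) [g1 [v [g2 [ws_split Ku /negPn /eqP Kv]]]].
have zws : path e z (w :: s) by rewrite /= zw.
have uv : e (last z g1) v by move: zws; rewrite ws_split cat_path /= => /and3P [].
have v_ws : v \in w :: s by rewrite ws_split mem_cat mem_head orbT.
have u_zws : last z g1 \in z :: w :: s by rewrite ws_split -cat_cons mem_cat mem_last.
exists v; first by rewrite /c 2!in_cons v_ws !orbT.
rewrite (cut_edge_swap uv) ?Kv //; split=> //; last by rewrite /c in_cons u_zws orbT.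
by apply: contraNneq y_zws => <-; rewrite in_cons v_ws orbT.
Qed.

(* A shortest path from [y] to [v] must leave [y] through [prev c y]; its
   mirror image is a shortest path from [next c y] to [a v], which must then
   leave through [next c (next c y)]. *)
Lemma mirror_reflects_prev c y v :
  convex_cycle e c -> y \in c -> [set y; next c y] \in F ->
  v \in c -> v != y -> K v = K y -> a v \in c -> K (a v) != K y ->
  a (prev c y) = next c (next c y).
Proof.
move=> c_cvx y_c yF v_c vy Kv av_c Kav; have [[_ [c_uniq c_cycle]] _] := c_cvx.
have [ayz azy] := a_swap (next_cycle c_cycle y_c) yF.
have Kyz : K y != K (next c y) by rewrite -K_cut // next_cycle.
have Kzy : K (next c y) != K y by rewrite eq_sym.
have [[|h g] [g_e g_v g_size]] := gdist_path e_conn y v.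
  by move: vy; rewrite -g_v eqxx.
have g_short : shortest_path e y (h :: g) v by apply/(shortest_pathE e_conn).
have h_x : h = prev c y.
  have [h_z|<-] := convex_first_step c_cvx y_c v_c g_short; last by rewrite prev_next.
  by rewrite -h_z in g_short; case: (not_shortest_via_mirror azy Kzy Kv g_short).
subst h; set x := prev c y in g_e g_v g_size g_short *.
have ag_short : shortest_path e (next c y) (a x :: map a g) (a v).
  apply/(shortest_pathE e_conn); rewrite -ayz gdist_aut // -g_size.
  by rewrite -[a x :: _]/(map a (x :: g)) path_map_aut // last_map g_v size_map.
have z_c : next c y \in c by rewrite mem_next.
have [//|/(congr1 (prev c))] := convex_first_step c_cvx z_c av_c ag_short.
rewrite !prev_next // => ax_y; rewrite ax_y in ag_short.
have Kavz : K (a v) = K (next c y).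
  by move: Kav Kyz; case: (K (a v)); case: (K y); case: (K (next c y)).
by case: (not_shortest_via_mirror ayz Kyz Kavz ag_short).
Qed.

Lemma mirror_reflects_cycle c y :
  convex_cycle e c -> y \in c -> [set y; next c y] \in F ->
  a (prev c y) = next c (next c y).
Proof.
move=> c_cvx y_c yF; have [[c_size [c_uniq _]] _] := c_cvx.
case: (rot_to y_c) => i s c_rot; have [c_cycle _] := convex_rot i c_cvx.
case: s c_rot => [|z [|w s]] c_rot; try by move: c_size; rewrite -(size_rot i) c_rot.
have yzF : [set y; z] \in F by move: yF; rewrite -(next_rot i c_uniq) c_rot /= eqxx.
rewrite c_rot in c_cycle; have [v v_c [vy Kv av_c Kav]] := cycle_recrosses_cut c_cycle yzF.
by apply: (mirror_reflects_prev c_cvx y_c yF _ vy Kv _ Kav); rewrite -(mem_rot i) c_rot.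
Qed.

End MirrorClass.

Lemma mirror_class_cut (T : finType) (e : rel T) F (a : {perm T}) :
  symmetric e -> mirror_class e F a ->
  exists K : pred T, forall x y, e x y -> ([set x; y] \in F) = (K x != K y).
Proof.
move=> e_sym [_ [a_swap [u [v [uv_sep [sides a_sides]]]]]].
have d_sym : symmetric (del_edges e F) by move=> x y; rewrite /del_edges e_sym setUC.
have c_sym := sym_connect_sym d_sym.
exists (connect (del_edges e F) u) => x y xy; apply/idP/idP=> [xyF|].
  have [ax _] := a_swap x y xy xyF; rewrite a_sides ax.
  apply: contraNneq uv_sep => vy_uy; have := sides y; rewrite -vy_uy orbb => vy.
  by apply: (connect_trans (_ : connect _ u y)); rewrite -?vy_uy // c_sym.
apply: contraR => xyNF; have xy_d : del_edges e F x y by rewrite /del_edges xy xyNF.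
apply/eqP; apply/idP/idP=> [ux|uy]; first exact: connect_trans ux (connect1 xy_d).
by apply: connect_trans uy (connect1 _); rewrite d_sym.
Qed.

Lemma mirror_class_reflects_cycle (T : finType) (e : rel T) F (a : {perm T}) c y :
  symmetric e -> connected_graph e -> mirror_class e F a ->
  convex_cycle e c -> y \in c -> [set y; next c y] \in F ->
  a (prev c y) = next c (next c y).
Proof.
move=> e_sym e_conn F_mirror c_cvx y_c.
have [a_aut [a_swap _]] := F_mirror; have [K K_cut] := mirror_class_cut e_sym F_mirror.
exact: (mirror_reflects_cycle e_sym e_conn a_aut a_swap K_cut).
Qed.

Lemma mirror_graph_edge (T : finType) (e : rel T) x y : mirror_graph e -> e x y ->
  exists F (a : {perm T}), mirror_class e F a /\ [set x; y] \in F.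
Proof.
move=> [_ [_ [P [P_part P_mirror]]]] xy.
have: [set x; y] \in edges e.
  by rewrite inE; apply/existsP; exists x; apply/existsP; exists y; rewrite xy eqxx.
case/and3P: P_part => /eqP <- _ _ /bigcupP [F F_P xyF].
by have [a F_mirror] := P_mirror F F_P; exists F, a.
Qed.

Section ConvexCyclesInMirrorGraph.
Variables (T : finType) (e : rel T).
Hypothesis e_mirror : mirror_graph e.

(* The mirror of the edge [{y, next y}] sends [prev y] to [next (next y)] in
   every convex cycle through that edge, so agreement propagates along [c]. *)
Lemma convex_cycles_agree c d x y z :
  convex_cycle e c -> convex_cycle e d -> x \in c -> x \in d ->
  next c x = y -> next c y = z -> next d x = y -> next d y = z ->
  {in c, forall t, t \in d /\ next d t = next c t}.
Proof.
move=> c_cvx d_cvx x_c x_d ncx ncy ndx ndy.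
have [[e_sym _] [e_conn _]] := e_mirror.
have [[_ [c_uniq c_cycle]] _] := c_cvx; have [[_ [d_uniq _]] _] := d_cvx.
have iter_c k : iter k (next c) x \in c by elim: k => //= k IHk; rewrite mem_next.
have iter_d k : iter k (next d) x \in d by elim: k => //= k IHk; rewrite mem_next.
have agree k : [/\ iter k (next c) x = iter k (next d) x,
                   iter k.+1 (next c) x = iter k.+1 (next d) x &
                   iter k.+2 (next c) x = iter k.+2 (next d) x].
  elim: k => [|k [e0 e1 e2]]; first by rewrite /= ncx ncy ndx ndy.
  split=> //.
  have [F [a [F_mirror tF]]] := mirror_graph_edge e_mirror (next_cycle c_cycle (iter_c k.+1)).
  have tF' : [set iter k.+1 (next d) x; iter k.+2 (next d) x] \in F by rewrite -e1 -e2.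
  have := mirror_class_reflects_cycle e_sym e_conn F_mirror c_cvx (iter_c k.+1) tF.
  have := mirror_class_reflects_cycle e_sym e_conn F_mirror d_cvx (iter_d k.+1) tF'.
  by rewrite !iterS !prev_next // => <- <-; rewrite e0.
move=> t t_c.
have x_t : fconnect (next c) x t by rewrite (fconnect_cycle (cycle_next c_uniq) x_c).
rewrite -(iter_findex x_t); have [e0 e1 _] := agree (findex (next c) x t).
by rewrite -[next c _]/(iter _.+1 (next c) x) e1 e0.
Qed.

Lemma convex_cedges_eq c1 c2 x y z :
  convex_cycle e c1 -> convex_cycle e c2 ->
  [set x; y] \in cedges c1 -> [set y; z] \in cedges c1 ->
  [set x; y] \in cedges c2 -> [set y; z] \in cedges c2 -> x != z ->
  cedges c1 = cedges c2.
Proof.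
move=> c1_cvx c2_cvx xy1 yz1 xy2 yz2 xz.
have [[e_sym _] _] := e_mirror.
have [d1 d1_cvx [<- x_d1 nx1 ny1]] := convex_cycle_orient e_sym c1_cvx xy1 yz1 xz.
have [d2 d2_cvx [<- x_d2 nx2 ny2]] := convex_cycle_orient e_sym c2_cvx xy2 yz2 xz.
apply/eqP; rewrite eqEsubset !cedges_subset //.
  exact: (convex_cycles_agree d2_cvx d1_cvx x_d2 x_d1 nx2 ny2 nx1 ny1).
exact: (convex_cycles_agree d1_cvx d2_cvx x_d1 x_d2 nx1 ny1 nx2 ny2).
Qed.

Variables (c1 c2 : seq T).
Hypotheses (c1_cvx : convex_cycle e c1) (c2_cvx : convex_cycle e c2).
Hypothesis c12 : cedges c1 != cedges c2.

Let S := cverts c1 :&: cverts c2.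

Lemma common_vertices_adj u v : u \in S -> v \in S -> u != v ->
  [/\ e u v, [set u; v] \in cedges c1 & [set u; v] \in cedges c2].
Proof.
rewrite !inE => /andP [u1 u2] /andP [v1 v2] uv.
have [_ [e_conn _]] := e_mirror.
have [p [p_e p_v p_size]] := gdist_path e_conn u v.
have p_short : shortest_path e u p v by apply/(shortest_pathE e_conn).
have [_ /subsetP p1] := c1_cvx.2 u v p u1 v1 p_short.
have [_ /subsetP p2] := c2_cvx.2 u v p u2 v2 p_short.
case: p p_e p_v p_short p1 p2 {p_size} => [|q [|q' r]] /=.
- by move=> _ vu; rewrite vu eqxx in uv.
- by move=> /andP [uq _] <- _ p1 p2; rewrite uq p1 ?p2 // setU11.
move=> /and3P [_ _ r_e] r_v [_ [_ p_min]] p1 p2.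
have uq' : u != q'.
  apply/eqP=> uq'; subst q'; have := p_min r r_e r_v.
  by rewrite ltnNge => /negP; apply; apply: leqnSn.
case/eqP: c12; apply: (@convex_cedges_eq _ _ u q q' c1_cvx c2_cvx _ _ _ _ uq');
  [apply: p1 | apply: p1 | apply: p2 | apply: p2]; by rewrite ?setU11 // setU1r // setU11.
Qed.

Lemma common_vertices_at_most_two u v w :
  u \in S -> v \in S -> w \in S -> u != v -> u != w -> v = w.
Proof.
move=> u_S v_S w_S uv uw; apply: contraTeq c12 => vw; rewrite negbK; apply/eqP.
have vu : v != u by rewrite eq_sym.
have [_ vu1 vu2] := common_vertices_adj v_S u_S vu.
have [_ uw1 uw2] := common_vertices_adj u_S w_S uw.
exact: convex_cedges_eq c1_cvx c2_cvx vu1 uw1 vu2 uw2 vw.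
Qed.

Lemma common_edge_ends E : E \in cedges c1 :&: cedges c2 ->
  exists t t', [/\ E = [set t; t'], t \in S, t' \in S & t != t'].
Proof.
have [[_ e_irr] _] := e_mirror; have [[_ [_ c1_cycle]] _] := c1_cvx.
rewrite inE => /andP [E1 E2]; case/imsetP: (E1) => t t_c1 E_t.
exists t, (next c1 t); split=> //.
- by rewrite !inE t_c1 (cedges_vertex E2) // E_t set21.
- by rewrite !inE mem_next t_c1 (cedges_vertex E2) // E_t set22.
by apply: contraTneq (next_cycle c1_cycle t_c1) => <-; rewrite e_irr.
Qed.

Lemma common_vertices_pair x y : x \in S -> y \in S -> x != y -> S = [set x; y].
Proof.
move=> x_S y_S xy; apply/setP=> w; rewrite in_set2.
apply/idP/idP=> [w_S|/orP [] /eqP ->] //.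
have [//|xw] := eqVneq x w.
by rewrite (common_vertices_at_most_two x_S w_S y_S xw xy) eqxx orbT.
Qed.

Lemma common_edges_pair x y : x \in S -> y \in S -> x != y ->
  cedges c1 :&: cedges c2 = [set [set x; y]].
Proof.
move=> x_S y_S xy; have S_xy := common_vertices_pair x_S y_S xy.
have [_ xy1 xy2] := common_vertices_adj x_S y_S xy.
apply/setP=> E; rewrite in_set1; apply/idP/eqP=> [|->]; last by rewrite inE xy1 xy2.
case/common_edge_ends=> t [t' [-> t_S t'_S tt']].
move: t_S t'_S tt'; rewrite S_xy !in_set2.
by case/orP=> /eqP ->; case/orP=> /eqP ->; rewrite ?eqxx // setUC.
Qed.

Lemma common_edges_single x : S = [set x] -> cedges c1 :&: cedges c2 = set0.
Proof.
move=> S_x; apply/setP=> E; rewrite in_set0; apply/negP.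
case/common_edge_ends=> t [t' [_ t_S t'_S]].
by move: t_S t'_S; rewrite S_x !in_set1 => /eqP -> /eqP ->; rewrite eqxx.
Qed.

End ConvexCyclesInMirrorGraph.

Theorem mainTheorem11 (T : finType) (e : rel T) (c1 c2 : seq T) :
  mirror_graph e ->
  convex_cycle e c1 -> convex_cycle e c2 ->
  cedges c1 != cedges c2 ->
  (cverts c1 :&: cverts c2 = set0) \/
  (exists x, cverts c1 :&: cverts c2 = [set x] /\
             cedges c1 :&: cedges c2 = set0) \/
  (exists x y, e x y /\ cverts c1 :&: cverts c2 = [set x; y] /\
               cedges c1 :&: cedges c2 = [set [set x; y]]).
Proof.
move=> e_mirror c1_cvx c2_cvx c12.
case: (set_0Vmem (cverts c1 :&: cverts c2)) => [S0|[x x_S]]; [by left | right].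
have [S_x|] := boolP (cverts c1 :&: cverts c2 \subset [set x]).
  have {}S_x : cverts c1 :&: cverts c2 = [set x].
    by apply/eqP; rewrite eqEsubset S_x sub1set x_S.
  by left; exists x; split; last exact: (common_edges_single e_mirror c1_cvx S_x).
case/subsetPn=> y y_S; rewrite in_set1 eq_sym => xy; right; exists x, y.
have [exy _ _] := common_vertices_adj e_mirror c1_cvx c2_cvx c12 x_S y_S xy.
split=> //; split.
exact: (common_vertices_pair e_mirror c1_cvx c2_cvx c12 x_S y_S xy).
exact: (common_edges_pair e_mirror c1_cvx c2_cvx c12 x_S y_S xy).
Qed.
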